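(* Let $\mathfrak m$ be an infinite cardinal with $\sup\{\mathfrak m^{\mathfrak n}:\mathfrak n<\mathfrak m\}=\mathfrak m$, and let $G$ be a subgroup of $\mathrm{Iso}(\mathbb U_{\mathfrak m})$ of density $<\mathfrak m$. Then the sets $V[x;\varepsilon]\cap G$, where $x\in\mathbb U_{\mathfrak m}$ and $\varepsilon>0$, form a neighbourhood base at the identity of $G$.
   Context: For an infinite cardinal $\mathfrak m$ satisfying $\sup\{\mathfrak m^{\mathfrak n}:\mathfrak n<\mathfrak m\}=\mathfrak m$, $\mathbb U_{\mathfrak m}$ denotes the Urysohn–Katětov space of weight $\mathfrak m$: the (unique up to isometry) complete metric space of density $\mathfrak m$ that contains an isometric copy of every metric space of weight $\le\mathfrak m$ and is $\mathfrak m$-homogeneous (every isometry between two subsets of cardinality $<\mathfrak m$ extends to an isometry of $\mathbb U_{\mathfrak m}$ onto itself). $\mathrm{Iso}(\mathbb U_{\mathfrak m})$ is its isometry group with the topology of pointwise convergence, and $V[x;\varepsilon]=\{g\in\mathrm{Iso}(\mathbb U_{\mathfrak m}) : d(x,gx)<\varepsilon\}$. *)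

From Stdlib Require Import Reals List.
Open Scope R_scope.

Definition le_card (A B : Type) : Prop :=
  exists f : A -> B, forall a a', f a = f a' -> a = a'.
Definition lt_card (A B : Type) : Prop := le_card A B /\ ~ le_card B A.

Definition infinite_card (M : Type) : Prop := le_card nat M.

(** sup { m^n : n < m } = m, where m = |M| is infinite.  Every cardinal
    n < m is the cardinality of some subset of M; m^n = |{x|P x} -> M|.
    Since m is infinite, m^1 = m is in the family, so sup = m iff every
    m^n (n < m) is <= m. *)
Definition sup_pow_cond (M : Type) : Prop :=
  forall P : M -> Prop, lt_card {x : M | P x} M -> le_card ({x : M | P x} -> M) M.

Definition is_metric {X : Type} (d : X -> X -> R) : Prop :=
  (forall x y, 0 <= d x y) /\
  (forall x y, d x y = 0 <-> x = y) /\
  (forall x y, d x y = d y x) /\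
  (forall x y z, d x z <= d x y + d y z).

Definition complete {X : Type} (d : X -> X -> R) : Prop :=
  forall u : nat -> X,
    (forall eps, 0 < eps -> exists N, forall n p, (n >= N)%nat -> (p >= N)%nat -> d (u n) (u p) < eps) ->
    exists l, forall eps, 0 < eps -> exists N, forall n, (n >= N)%nat -> d (u n) l < eps.

Definition dense_set {X : Type} (d : X -> X -> R) (D : X -> Prop) : Prop :=
  forall x eps, 0 < eps -> exists y, D y /\ d x y < eps.

(** weight (= density, for metric spaces) <= |M| *)
Definition weight_le {X : Type} (d : X -> X -> R) (M : Type) : Prop :=
  exists D, dense_set d D /\ le_card {y : X | D y} M.

Definition density_eq {X : Type} (d : X -> X -> R) (M : Type) : Prop :=
  weight_le d M /\ forall D, dense_set d D -> le_card M {y : X | D y}.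

Definition is_iso {X : Type} (d : X -> X -> R) (g : X -> X) : Prop :=
  (forall x y, d (g x) (g y) = d x y) /\ (forall y, exists x, g x = y).

Definition Urysohn_Katetov (M : Type) (X : Type) (d : X -> X -> R) : Prop :=
  is_metric d /\ complete d /\ density_eq d M /\
  (forall (Y : Type) (dY : Y -> Y -> R), is_metric dY -> weight_le dY M ->
     exists f : Y -> X, forall a b, d (f a) (f b) = dY a b) /\
  (forall (A : X -> Prop), lt_card {x : X | A x} M ->
     forall f : {x : X | A x} -> X,
       (forall a b, d (f a) (f b) = d (proj1_sig a) (proj1_sig b)) ->
       exists g, is_iso d g /\ forall a, g (proj1_sig a) = f a).

Definition subgroup_Iso {X : Type} (d : X -> X -> R) (G : (X -> X) -> Prop) : Prop :=
  (forall g, G g -> is_iso d g) /\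
  G (fun x => x) /\
  (forall g h, G g -> G h -> G (fun x => g (h x))) /\
  (forall g, G g -> exists h, G h /\ (forall x, h (g x) = x) /\ (forall x, g (h x) = x)).

(** Topology of pointwise convergence, relativised to G. *)
Definition open_in {X : Type} (d : X -> X -> R) (G : (X -> X) -> Prop)
    (U : (X -> X) -> Prop) : Prop :=
  (forall g, U g -> G g) /\
  (forall g, U g -> exists (xs : list X) (eps : R), 0 < eps /\
      forall h, G h -> (forall y, In y xs -> d (h y) (g y) < eps) -> U h).

Definition nbhd_in {X : Type} (d : X -> X -> R) (G : (X -> X) -> Prop)
    (g0 : X -> X) (N : (X -> X) -> Prop) : Prop :=
  (forall g, N g -> G g) /\
  exists U, open_in d G U /\ U g0 /\ forall g, U g -> N g.

Definition density_lt {X : Type} (d : X -> X -> R) (G : (X -> X) -> Prop) (M : Type) : Prop :=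
  exists S : (X -> X) -> Prop, (forall s, S s -> G s) /\
    lt_card {s : X -> X | S s} M /\
    forall U, open_in d G U -> (exists g, U g) -> exists s, S s /\ U s.

Definition nbhd_base {X : Type} (d : X -> X -> R) (G : (X -> X) -> Prop)
    (g0 : X -> X) (B : ((X -> X) -> Prop) -> Prop) : Prop :=
  (forall V, B V -> nbhd_in d G g0 V) /\
  (forall N, nbhd_in d G g0 N -> exists V, B V /\ forall g, V g -> N g).

Definition VG {X : Type} (d : X -> X -> R) (G : (X -> X) -> Prop) (x : X) (eps : R)
    : (X -> X) -> Prop := fun g => G g /\ d x (g x) < eps.

From Stdlib Require Import Reals List Lra Lia Classical ClassicalEpsilon FunctionalExtensionality ProofIrrelevance.
Open Scope R_scope.

(** Let [S] be a dense subset of [G] of size [< m]. A basic neighbourhood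
    of the identity in [G] is given by finitely many points and a radius, so
    it suffices to find, for any finite set [L] of points, a single point [x]
    and [delta > 0] such that [d x (g x) < delta] forces [g] to move every
    point of [L] by less than [eps]. By induction on [L] this reduces to two
    points [p <> q] ([pair_control]). For those, realize in [U_m] the Katětov
    function [katetov_pin p q] on the union of the [S]-orbits of [p] and [q];
    this set has size [< m] by the cardinal hypothesis, so a realizing point
    [x] exists by universality plus [m]-homogeneity ([katetov_realize]).
    A metric computation ([katetov_pin_rigid]) shows that an isometry in [S]
    moving [x] little also moves [p] and [q] little, and density of [S]
    transfers this to every [g] in [G]. *)

Lemma sig_eq {A : Type} (P : A -> Prop) (a b : {x | P x}) :
  proj1_sig a = proj1_sig b -> a = b.
Proof. apply eq_sig_hprop; intros; apply proof_irrelevance. Qed.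

Lemma le_card_trans (A B C : Type) : le_card A B -> le_card B C -> le_card A C.
Proof. intros [f Hf] [g Hg]; exists (fun a => g (f a)); auto. Qed.

Lemma lt_card_mono (A B M : Type) : le_card A B -> lt_card B M -> lt_card A M.
Proof.
  intros HAB [HBM HMB]; split.
  - exact (le_card_trans _ _ _ HAB HBM).
  - intros HMA; exact (HMB (le_card_trans _ _ _ HMA HAB)).
Qed.

Lemma le_card_option (A B : Type) : le_card A B -> le_card (option A) (option B).
Proof.
  intros [f Hf]; exists (option_map f).
  intros [a|] [a'|]; simpl; intro H; try discriminate; auto.
  injection H; intro; f_equal; auto.
Qed.

Lemma range_section {A B : Type} (f : A -> B) :
  exists r : {y | exists x, f x = y} -> A, forall y, f (r y) = proj1_sig y.
Proof.
  exists (fun y => proj1_sig (constructive_indefinite_description (fun x => f x = proj1_sig y) (proj2_sig y))).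
  intro y; exact (proj2_sig (constructive_indefinite_description _ (proj2_sig y))).
Qed.

Lemma le_card_range {A B : Type} (f : A -> B) : le_card {y | exists x, f x = y} A.
Proof.
  destruct (range_section f) as [r Hr]; exists r.
  intros y y' E; apply sig_eq; rewrite <- Hr, <- (Hr y'), E; reflexivity.
Qed.

(** Under the hypothesis [sup_pow_cond], a type [T] smaller than the
    infinite [M] has [|T -> nat| <= |M|]: transport [T] onto its image in
    [M] and use [m^n <= m]. *)
Lemma fun_nat_le (M T : Type) :
  infinite_card M -> sup_pow_cond M -> lt_card T M -> le_card (T -> nat) M.
Proof.
  intros [iota Hiota] Hsup [[e He] HMT].
  destruct (range_section e) as [r Hr].
  assert (Hre : forall t, r (exist _ (e t) (ex_intro _ t eq_refl)) = t)
    by (intro t; apply He, Hr).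
  assert (Himg : lt_card {m | exists t, e t = m} M).
  { split.
    - exists (@proj1_sig _ _); intros; apply sig_eq; auto.
    - intro HM; exact (HMT (le_card_trans _ _ _ HM (le_card_range e))). }
  destruct (Hsup _ Himg) as [h Hh].
  exists (fun phi => h (fun m => iota (phi (r m)))).
  intros phi psi E; apply functional_extensionality; intro t.
  apply Hh in E.
  pose proof (f_equal (fun F => F (exist _ (e t) (ex_intro _ t eq_refl))) E) as Et.
  simpl in Et; apply Hiota in Et; rewrite Hre in Et; exact Et.
Qed.

(** A pair [(t, c)] is coded by the function that is [1 + code c] at [t] and
    [0] elsewhere. *)
Lemma prod_le_fun (T F : Type) (code : F -> nat) :
  (forall c c', code c = code c' -> c = c') -> le_card (T * F) (T -> nat).
Proof.
  intro Hcode.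
  exists (fun w t => if excluded_middle_informative (t = fst w) then S (code (snd w)) else 0%nat).
  intros [t c] [t' c'] E; simpl in E.
  pose proof (f_equal (fun F => F t) E) as Et; simpl in Et.
  destruct (excluded_middle_informative (t = t)) as [_|]; [|congruence].
  destruct (excluded_middle_informative (t = t')) as [<-|]; [|discriminate].
  injection Et; intro; f_equal; auto.
Qed.

Lemma le_list_sum (n : nat) (l : list nat) : In n l -> (n <= list_sum l)%nat.
Proof. induction l as [|a l IH]; simpl; [tauto|]; intros [<-|Hn]; [|specialize (IH Hn)]; lia. Qed.

(** Cantor's diagonal argument: [T -> nat] does not inject into [T * F] for
    a finite [F] (enumerated by a list), since on the fibre over [t] the
    diagonal function exceeds all the finitely many candidates at [t]. *)
Lemma cantor_fun_prod (T F : Type) (enum : list F) :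
  (forall c, In c enum) -> ~ le_card (T -> nat) (T * F).
Proof.
  intros Henum [J HJ].
  destruct (range_section J) as [r Hr].
  set (v := fun w => match excluded_middle_informative (exists psi, J psi = w) with
                     | left H => r (exist _ w H) | right _ => fun _ => 0%nat end).
  assert (Hv : forall psi, v (J psi) = psi).
  { intro psi; unfold v.
    destruct excluded_middle_informative as [H|H]; [|exfalso; eauto].
    apply HJ; rewrite Hr; reflexivity. }
  set (phi := fun t => S (list_sum (map (fun c => v (t, c) t) enum))).
  destruct (J phi) as [t c] eqn:E.
  assert (Hphi : v (t, c) t = phi t) by (rewrite <- E, Hv; reflexivity).
  assert (Hle : (v (t, c) t <= list_sum (map (fun c => v (t, c) t) enum))%nat)
    by (apply le_list_sum, (in_map (fun c => v (t, c) t)), Henum).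
  unfold phi in Hphi; lia.
Qed.

(** The cardinal bound used for one-point extensions: if the inhabited [T]
    is smaller than [M], so is [1 + 2(|T| + 1)]. It is sandwiched between
    [T * F] ([F] finite) and [T -> nat], which is [<= |M|] by [fun_nat_le] yet
    not injectable into [T * F] by [cantor_fun_prod]. *)
Lemma small_extension_lt (M T : Type) (t0 : T) :
  infinite_card M -> sup_pow_cond M -> lt_card T M ->
  lt_card (option (option T * bool)) M.
Proof.
  intros Hinf Hsup HT.
  set (code := fun c : bool * option bool =>
         ((if fst c then 3 else 0) +
          match snd c with None => 0 | Some true => 1 | Some false => 2 end)%nat).
  assert (Hcode : forall c c', code c = code c' -> c = c')
    by (intros [[] [[]|]] [[] [[]|]]; unfold code; simpl; intro H;
        reflexivity || discriminate H).
  assert (Henum : forall c, In c (list_prod (true :: false :: nil) (None :: Some true :: Some false :: nil)))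
    by (intros [b o]; apply in_prod; destruct b; destruct o as [[]|]; simpl; tauto).
  assert (Henc : le_card (option (option T * bool)) (T * (bool * option bool))).
  { exists (fun w => match w with
                     | None => (t0, (false, None))
                     | Some (o, b) => (match o with Some t => t | None => t0 end,
                                       (match o with Some _ => true | None => false end, Some b))
                     end).
    intros [[[t|] b]|] [[[t'|] b']|]; simpl; intro E;
      inversion E; reflexivity. }
  pose proof (fun_nat_le M T Hinf Hsup HT) as Hfun.
  split.
  - exact (le_card_trans _ _ _ Henc (le_card_trans _ _ _ (prod_le_fun T _ code Hcode) Hfun)).
  - intro HM.
    exact (cantor_fun_prod T _ _ Henum
             (le_card_trans _ _ _ Hfun (le_card_trans _ _ _ HM Henc))).
Qed.

Section Metric.
Variables (X : Type) (d : X -> X -> R).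
Hypothesis Hd : is_metric d.

Lemma metric_nonneg (x y : X) : 0 <= d x y.
Proof. apply Hd. Qed.

Lemma metric_self (x : X) : d x x = 0.
Proof. apply Hd; reflexivity. Qed.

Lemma metric_zero (x y : X) : d x y = 0 -> x = y.
Proof. apply Hd. Qed.

Lemma metric_sym (x y : X) : d x y = d y x.
Proof. apply Hd. Qed.

Lemma metric_tri (x y z : X) : d x z <= d x y + d y z.
Proof. apply Hd. Qed.

(** The Katětov function of the two points [p], [q]: a one-point extension
    at distance [K] from [p] and [K + eta] from [q], where [K = d p q + 1]
    and [eta = d p q / 2]. A point realizing it pins down both [p] and [q]
    (see [katetov_pin_rigid]). *)
Definition katetov_pin (p q z : X) : R :=
  Rmin (d p q + 1 + d z p) (d p q + 1 + d p q / 2 + d z q).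

Lemma katetov_pin_pos (p q z : X) : 0 < katetov_pin p q z.
Proof.
  pose proof (metric_nonneg p q); pose proof (metric_nonneg z p); pose proof (metric_nonneg z q).
  unfold katetov_pin, Rmin; destruct Rle_dec; lra.
Qed.

Lemma katetov_pin_lipschitz (p q a b : X) :
  katetov_pin p q a <= d a b + katetov_pin p q b.
Proof.
  pose proof (metric_tri a b p); pose proof (metric_tri a b q).
  unfold katetov_pin, Rmin; do 2 destruct Rle_dec; lra.
Qed.

Lemma katetov_pin_katetov (p q a b : X) :
  d a b <= katetov_pin p q a + katetov_pin p q b.
Proof.
  pose proof (metric_tri a p b); pose proof (metric_tri a q b);
  pose proof (metric_tri p q b); pose proof (metric_tri q p b);
  pose proof (metric_sym b p); pose proof (metric_sym b q); pose proof (metric_sym p q);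
  pose proof (metric_nonneg a p); pose proof (metric_nonneg a q);
  pose proof (metric_nonneg b p); pose proof (metric_nonneg b q).
  unfold katetov_pin, Rmin; do 2 destruct Rle_dec; lra.
Qed.

Lemma katetov_pin_at_p (p q : X) : katetov_pin p q p = d p q + 1.
Proof.
  pose proof (metric_nonneg p q).
  unfold katetov_pin, Rmin; rewrite metric_self; destruct Rle_dec; lra.
Qed.

Lemma katetov_pin_at_q (p q : X) : p <> q -> katetov_pin p q q = d p q + 1 + d p q / 2.
Proof.
  intro Hpq.
  assert (0 < d p q) by (destruct (metric_nonneg p q) as [|E]; [lra|symmetry in E; apply metric_zero in E; tauto]).
  unfold katetov_pin, Rmin; rewrite metric_self, (metric_sym q p); destruct Rle_dec; lra.
Qed.

Lemma katetov_pin_rigid (p q x : X) (s : X -> X) (r : R) :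
  p <> q -> (forall a b, d (s a) (s b) = d a b) ->
  (forall z, z = p \/ z = q \/ z = s p \/ z = s q -> d x z = katetov_pin p q z) ->
  r <= d p q / 4 -> d x (s x) < r ->
  d (s p) p < r /\ d (s q) q < r.
Proof.
  intros Hpq Hs Hx Hr Hsx.
  assert (Hfp := katetov_pin_at_p p q); assert (Hfq := katetov_pin_at_q p q Hpq).
  assert (Hxp := Hx p (or_introl eq_refl)); assert (Hxq := Hx q (or_intror (or_introl eq_refl))).
  assert (Hxsp := Hx (s p) (or_intror (or_intror (or_introl eq_refl)))).
  assert (Hxsq := Hx (s q) (or_intror (or_intror (or_intror eq_refl)))).
  pose proof (metric_tri x (s x) (s p)); pose proof (metric_tri x (s x) (s q)).
  rewrite Hs in *.
  (* [d x (s p) < K + r], which the [q]-branch of the minimum cannot meet. *)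
  assert (Hp : d (s p) p < r).
  { pose proof (metric_nonneg (s p) q); pose proof (metric_nonneg p q).
    unfold katetov_pin, Rmin in Hxsp; destruct Rle_dec in Hxsp; lra. }
  split; [exact Hp|].
  (* [d x (s q) < K + eta + r]; the [p]-branch would put [s q] within
     [eta + r] of [p], hence [s p] and [s q] closer than [d p q]. *)
  pose proof (Hs p q); pose proof (metric_tri (s p) p (s q)); pose proof (metric_sym p (s q)).
  unfold katetov_pin, Rmin in Hxsq; destruct Rle_dec in Hxsq; lra.
Qed.

End Metric.

Section OnePointExtension.
Variables (X : Type) (d : X -> X -> R) (A : X -> Prop) (f : X -> R).
Hypothesis Hd : is_metric d.
Hypothesis f_pos : forall a, 0 < f a.
Hypothesis f_lipschitz : forall a b, f a <= d a b + f b.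
Hypothesis f_katetov : forall a b, d a b <= f a + f b.

Definition ext_dist (u v : option {z | A z}) : R :=
  match u, v with
  | Some a, Some b => d (proj1_sig a) (proj1_sig b)
  | Some a, None => f (proj1_sig a)
  | None, Some b => f (proj1_sig b)
  | None, None => 0
  end.

Lemma ext_dist_metric : is_metric ext_dist.
Proof.
  split; [|split; [|split]].
  - intros [a|] [b|]; simpl.
    + apply (metric_nonneg X d Hd).
    + apply Rlt_le, f_pos.
    + apply Rlt_le, f_pos.
    + apply Rle_refl.
  - intros [a|] [b|]; simpl; split; intro H; try discriminate H.
    + f_equal; apply sig_eq, (metric_zero X d Hd); exact H.
    + injection H; intros ->; apply (metric_self X d Hd).
    + exfalso; pose proof (f_pos (proj1_sig a)); lra.
    + exfalso; pose proof (f_pos (proj1_sig b)); lra.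
    + reflexivity.
    + reflexivity.
  - intros [a|] [b|]; simpl; try reflexivity; apply (metric_sym X d Hd).
  - intros [a|] [b|] [c|]; simpl.
    + apply (metric_tri X d Hd).
    + apply f_lipschitz.
    + apply f_katetov.
    + lra.
    + pose proof (f_lipschitz (proj1_sig c) (proj1_sig b));
        pose proof (metric_sym X d Hd (proj1_sig b) (proj1_sig c)); lra.
    + pose proof (f_pos (proj1_sig b)); lra.
    + lra.
    + lra.
Qed.

End OnePointExtension.

(** Embed the abstract extension by universality, then move the embedded
    copy of [A] back onto [A] by [|M|]-homogeneity. *)
Lemma katetov_realize (M X : Type) (d : X -> X -> R) (A : X -> Prop) (f : X -> R) :
  Urysohn_Katetov M X d ->
  (forall a, 0 < f a) -> (forall a b, f a <= d a b + f b) ->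
  (forall a b, d a b <= f a + f b) ->
  lt_card (option {z | A z}) M ->
  exists x, forall z, A z -> d x z = f z.
Proof.
  intros [Hd [_ [_ [Huniv Hhom]]]] f_pos f_lip f_kat Hsmall.
  set (dY := ext_dist X d A f).
  assert (HY := ext_dist_metric X d A f Hd f_pos f_lip f_kat).
  assert (HwY : weight_le dY M).
  { exists (fun _ => True); split.
    - intros y eps He; exists y; split; [exact I|].
      rewrite (metric_self _ dY HY); exact He.
    - refine (le_card_trans _ _ _ _ (proj1 Hsmall)).
      exists (@proj1_sig _ _); intros; apply sig_eq; assumption. }
  destruct (Huniv _ dY HY HwY) as [e He].
  (* [r] recovers a point of [A] from its copy in the embedded image. *)
  destruct (range_section (fun a => e (Some a))) as [r Hr].
  assert (HB : lt_card {w | exists a, e (Some a) = w} M).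
  { refine (lt_card_mono _ _ _ (le_card_trans _ _ _ (le_card_range _) _) Hsmall).
    exists Some; intros a a' E; injection E; auto. }
  destruct (Hhom _ HB (fun w => proj1_sig (r w))) as [g [[Hg _] Hgr]].
  { intros w w'.
    rewrite <- (Hr w), <- (Hr w'), He; reflexivity. }
  exists (g (e None)); intros z Hz.
  set (a := exist A z Hz).
  set (w := exist (fun w => exists a, e (Some a) = w) (e (Some a)) (ex_intro _ a eq_refl)).
  assert (Hra : proj1_sig (r w) = z).
  { apply (metric_zero X d Hd).
    change (dY (Some (r w)) (Some a) = 0).
    rewrite <- He, (Hr w); apply (metric_self X d Hd). }
  specialize (Hgr w); simpl in Hgr; rewrite Hra in Hgr.
  rewrite <- Hgr at 1; rewrite Hg, He; reflexivity.
Qed.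

Definition max_over {A : Type} (F : A -> R) (L : list A) : R :=
  fold_right (fun y m => Rmax (F y) m) 0 L.

Lemma max_over_ge {A : Type} (F : A -> R) (L : list A) (y : A) :
  In y L -> F y <= max_over F L.
Proof.
  induction L as [|a L IH]; simpl; [tauto|].
  intros [<-|Hy]; [apply Rmax_l|eapply Rle_trans; [apply IH, Hy|apply Rmax_r]].
Qed.

Lemma max_over_lt {A : Type} (F : A -> R) (L : list A) (c : R) :
  0 < c -> (forall y, In y L -> F y < c) -> max_over F L < c.
Proof.
  intros Hc; induction L as [|a L IH]; simpl; intro HL; [exact Hc|].
  apply Rmax_lub_lt; auto.
Qed.

Section PointwiseTopology.
Variables (X : Type) (d : X -> X -> R) (G : (X -> X) -> Prop).
Hypothesis Hd : is_metric d.

Lemma pointwise_ball_open (g : X -> X) (L : list X) (rho : R) :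
  0 < rho -> open_in d G (fun h => G h /\ forall y, In y L -> d (h y) (g y) < rho).
Proof.
  intro Hrho; split; [intros h [Gh _]; exact Gh|].
  intros h [Gh Hh].
  set (m := max_over (fun y => d (h y) (g y)) L).
  assert (Hm : m < rho)
    by (apply max_over_lt; auto).
  exists L, (rho - m); split; [lra|].
  intros h' Gh' Hh'; split; [exact Gh'|]; intros y Hy.
  pose proof (Hh' y Hy); pose proof (max_over_ge (fun y => d (h y) (g y)) L y Hy).
  pose proof (metric_tri X d Hd (h' y) (h y) (g y)); unfold m in *; lra.
Qed.

Lemma VG_open (x : X) (eps : R) : open_in d G (VG d G x eps).
Proof.
  split; [intros g [Gg _]; exact Gg|].
  intros g [Gg Hg].
  exists (x :: nil), (eps - d x (g x)); split; [lra|].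
  intros h Gh Hh; split; [exact Gh|].
  pose proof (Hh x (or_introl eq_refl)); pose proof (metric_tri X d Hd x (g x) (h x)).
  pose proof (metric_sym X d Hd (g x) (h x)); lra.
Qed.

End PointwiseTopology.

Section Control.
Variables (M X : Type) (d : X -> X -> R) (G S : (X -> X) -> Prop).
Hypothesis M_infinite : infinite_card M.
Hypothesis M_sup_pow : sup_pow_cond M.
Hypothesis X_urysohn : Urysohn_Katetov M X d.
Hypothesis G_subgroup : subgroup_Iso d G.
Hypothesis S_in_G : forall s, S s -> G s.
Hypothesis S_small : lt_card {s | S s} M.
Hypothesis S_dense : forall U, open_in d G U -> (exists g, U g) -> exists s, S s /\ U s.

Let Hd : is_metric d := proj1 X_urysohn.

(** [U_m] is nonempty, since its density [m] is infinite. *)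
Lemma urysohn_inhabited : inhabited X.
Proof.
  destruct M_infinite as [iota _].
  pose proof X_urysohn as [_ [_ [[_ Hdens] _]]].
  assert (Hall : dense_set d (fun _ => True)).
  { intros x eps He; exists x; split; [exact I|]; rewrite (metric_self X d Hd); exact He. }
  destruct (Hdens _ Hall) as [k _].
  exact (inhabits (proj1_sig (k (iota 0%nat)))).
Qed.

Lemma S_approx (g : X -> X) (L : list X) (rho : R) :
  G g -> 0 < rho -> exists s, S s /\ forall y, In y L -> d (s y) (g y) < rho.
Proof.
  intros Gg Hrho.
  destruct (S_dense _ (pointwise_ball_open X d G Hd g L rho Hrho)) as [s [Ss [_ Hs]]].
  - exists g; split; [exact Gg|]; intros y _; rewrite (metric_self X d Hd); exact Hrho.
  - exists s; split; assumption.
Qed.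

(** Take [x] realizing [katetov_pin p q] on the [S]-orbits of [p] and [q]
    (a set of size [< |M|]). If [g] moves [x] little, so does some [s] in [S]
    close to [g] at [x], [p], [q]; rigidity then forces [s], hence [g], to
    move [p] and [q] little. *)
Lemma pair_control (p q : X) (eps : R) :
  0 < eps -> exists x delta, 0 < delta /\
    forall g, G g -> d x (g x) < delta -> d p (g p) < eps /\ d q (g q) < eps.
Proof.
  intro Heps.
  destruct (classic (p = q)) as [<-|Hpq].
  { exists p, eps; split; [exact Heps|]; intros g _ Hg; split; exact Hg. }
  assert (Hsig : 0 < d p q).
  { destruct (metric_nonneg X d Hd p q) as [|E]; [assumption|].
    symmetry in E; apply (metric_zero X d Hd) in E; contradiction. }
  destruct (S_approx (fun y => y) nil 1 (proj1 (proj2 G_subgroup)) Rlt_0_1) as [s0 [Ss0 _]].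
  set (orbit := fun w : option {s | S s} * bool =>
         (match fst w with Some s => proj1_sig s | None => fun y => y end)
           (if snd w then q else p)).
  set (A := fun z => exists w, orbit w = z).
  assert (HA : lt_card (option {z | A z}) M)
    by exact (lt_card_mono _ _ _ (le_card_option _ _ (le_card_range orbit))
                (small_extension_lt M _ (exist _ s0 Ss0) M_infinite M_sup_pow S_small)).
  destruct (katetov_realize M X d A (katetov_pin X d p q) X_urysohn
              (katetov_pin_pos X d Hd p q) (katetov_pin_lipschitz X d Hd p q)
              (katetov_pin_katetov X d Hd p q) HA) as [x Hx].
  set (rho := Rmin (d p q / 8) (eps / 3)).
  assert (Hrho_sig : rho <= d p q / 8) by apply Rmin_l.
  assert (Hrho_eps : rho <= eps / 3) by apply Rmin_r.
  assert (Hrho : 0 < rho) by (apply Rmin_glb_lt; lra).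
  exists x, rho; split; [exact Hrho|].
  intros g Gg Hg.
  destruct (S_approx g (x :: p :: q :: nil) rho Gg Hrho) as [s [Ss Hs]].
  assert (Hsx := Hs x (or_introl eq_refl)).
  assert (Hsp := Hs p (or_intror (or_introl eq_refl))).
  assert (Hsq := Hs q (or_intror (or_intror (or_introl eq_refl)))).
  assert (Hxsx : d x (s x) < 2 * rho).
  { pose proof (metric_tri X d Hd x (g x) (s x)); pose proof (metric_sym X d Hd (g x) (s x)); lra. }
  assert (Hpinned : d (s p) p < 2 * rho /\ d (s q) q < 2 * rho).
  { apply (katetov_pin_rigid X d Hd p q x s); [exact Hpq|apply (proj1 G_subgroup), S_in_G, Ss| |lra|exact Hxsx].
    intros z Hz; apply Hx.
    destruct Hz as [-> | [-> | [-> | ->]]];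
      [exists (None, false)|exists (None, true)
      |exists (Some (exist _ s Ss), false)|exists (Some (exist _ s Ss), true)]; reflexivity. }
  destruct Hpinned as [Hp Hq].
  pose proof (metric_tri X d Hd p (s p) (g p)); pose proof (metric_sym X d Hd p (s p)).
  pose proof (metric_tri X d Hd q (s q) (g q)); pose proof (metric_sym X d Hd q (s q)).
  split; lra.
Qed.

Lemma list_control (L : list X) (eps : R) :
  0 < eps -> exists x delta, 0 < delta /\
    forall g, G g -> d x (g x) < delta -> forall y, In y L -> d y (g y) < eps.
Proof.
  intro Heps; induction L as [|b L IH].
  - destruct urysohn_inhabited as [x].
    exists x, 1; split; [lra|]; intros g _ _ y [].
  - destruct IH as [x0 [delta0 [Hdelta0 Hctl0]]].
    destruct (pair_control x0 b (Rmin delta0 eps)) as [x [delta [Hdelta Hctl]]].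
    { apply Rmin_glb_lt; assumption. }
    exists x, delta; split; [exact Hdelta|].
    intros g Gg Hg y Hy.
    destruct (Hctl g Gg Hg) as [Hx0 Hb].
    pose proof (Rmin_l delta0 eps); pose proof (Rmin_r delta0 eps).
    destruct Hy as [<-|Hy]; [lra|].
    apply (Hctl0 g Gg); [lra|exact Hy].
Qed.

End Control.

Theorem lemma4p4p1 (M X : Type) (d : X -> X -> R) (G : (X -> X) -> Prop) :
  infinite_card M -> sup_pow_cond M -> Urysohn_Katetov M X d ->
  subgroup_Iso d G -> density_lt d G M ->
  nbhd_base d G (fun x => x)
    (fun V => exists (x : X) (eps : R), 0 < eps /\ forall g, V g <-> VG d G x eps g).
Proof.
  intros Hinf Hsup HUK HG [S [SG [Ssmall Sdense]]].
  pose proof (proj1 HUK) as Hd.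
  split.
  -
    intros V [x [eps [Heps HV]]].
    split; [intros g Vg; apply HV in Vg; exact (proj1 Vg)|].
    exists (VG d G x eps); split; [apply VG_open, Hd|split].
    + unfold VG; split; [exact (proj1 (proj2 HG))|rewrite (metric_self X d Hd); exact Heps].
    + intros g; apply HV.
  -
    intros N [_ [U [[_ Uopen] [Uid UN]]]].
    destruct (Uopen _ Uid) as [xs [eps [Heps Hxs]]].
    destruct (list_control M X d G S Hinf Hsup HUK HG SG Ssmall Sdense xs eps Heps)
      as [x [delta [Hdelta Hctl]]].
    exists (VG d G x delta); split.
    + exists x, delta; split; [exact Hdelta|]; intro g; reflexivity.
    + intros g [Gg Hg]; apply UN, Hxs; [exact Gg|].
      intros y Hy; rewrite (metric_sym X d Hd); exact (Hctl g Gg Hg y Hy).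
Qed.
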